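(* Let $p$ be a complex polynomial with at least two distinct roots and $h\in\mathbb{C}\setminus\{0\}$. If all the finite fixed points of $N_{h,p}$ are superattracting, then all the roots of $p$ have the same multiplicity. Moreover, if $m$ is this common multiplicity, i.e. $p=q^m$ where $q$ is a polynomial with only simple roots, then $N_{h,p}=N_q$, where $N_q(z)=z-\frac{q(z)}{q'(z)}$ is the classical Newton map of $q$.
   Context: The relaxed Newton map is $N_{h,p}(z)=z-h\,\frac{p(z)}{p'(z)}$; its finite fixed points are the roots of $p$. A fixed point is superattracting if its multiplier is $0$. *)

From HB Require Import structures.
From mathcomp Require Import all_boot all_order all_algebra.
From mathcomp Require Import fraction complex.
From mathcomp Require Import reals.
Set Implicit Arguments. Unset Strict Implicit. Unset Printing Implicit Defensive.
Import Order.TTheory GRing.Theory Num.Theory.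
Local Open Scope ring_scope.

Section Newton.
Variable F : fieldType.

(* Relaxed Newton map N_{h,p}(z) = z - h p(z)/p'(z), written as the quotient
   (z p'(z) - h p(z)) / p'(z) of two polynomials. *)
Definition newton_num (h : F) (p : {poly F}) : {poly F} := 'X * p^`() - h *: p.
Definition newton_den (p : {poly F}) : {poly F} := p^`().

Definition newton_rnum h p := newton_num h p %/ gcdp (newton_num h p) (newton_den p).
Definition newton_rden h p := newton_den p %/ gcdp (newton_num h p) (newton_den p).

Definition newton_frac (h : F) (p : {poly F}) : {fraction {poly F}} :=
  let tf := @FracField.tofrac {poly F} in
  tf 'X - tf (h%:P * p) / tf (p^`()).

Definition multiplier (h : F) (p : {poly F}) (a : F) : F :=
  let n := newton_rnum h p in let d := newton_rden h p in
  ((n^`()).[a] * d.[a] - n.[a] * (d^`()).[a]) / (d.[a] ^+ 2).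

Definition superattracting (h : F) (p : {poly F}) (a : F) : Prop :=
  multiplier h p a = 0.

(* The finite fixed points of N_{h,p} are the roots of p. *)
Definition all_finite_fixed_superattracting (h : F) (p : {poly F}) : Prop :=
  forall a, root p a -> superattracting h p a.

Definition simple_roots (q : {poly F}) : Prop :=
  forall a, root q a -> mup a q = 1%N.

End Newton.

(** At a root a of p of multiplicity k, write p = (X - a)^k u; the factor
   (X - a)^(k-1) cancels from the Newton quotient, and the derivative of the
   remaining quotient at a is 1 - h/k.  So superattraction at every root forces
   h = k for every root: all multiplicities equal h.  If moreover p = q^m with
   m = h, then h p / p' = m q^m / (m q^(m-1) q') = q / q'. *)

From HB Require Import structures.
From mathcomp Require Import all_boot all_order all_algebra.
From mathcomp Require Import fraction complex.
From mathcomp Require Import reals.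
From mathcomp Require Import ring.
Import Order.TTheory GRing.Theory Num.Theory.
Local Open Scope ring_scope.

Local Notation "x %:F" := (@FracField.tofrac _ x).

Lemma mup0 (F : fieldType) (a : F) : mup a 0 = 0%N.
Proof.
by apply/eqP; rewrite -leqn0 -ltnS -(size_poly0 F); exact: ltn_ord.
Qed.

Section QuotientDerivative.
Variable F : fieldType.

Definition quot_deriv (n d : {poly F}) (a : F) : F :=
  ((n^`()).[a] * d.[a] - n.[a] * (d^`()).[a]) / (d.[a] ^+ 2).

Lemma quot_deriv_eq (n d m w : {poly F}) (a : F) :
  n * w = m * d -> d.[a] != 0 -> w.[a] != 0 ->
  quot_deriv n d a = quot_deriv m w a.
Proof.
move=> Enw da0 wa0.
have Ea : n.[a] = m.[a] * d.[a] / w.[a].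
  by rewrite -hornerM -Enw hornerM mulfK.
have E'a : (n^`()).[a] =
    ((m^`()).[a] * d.[a] + m.[a] * (d^`()).[a] - n.[a] * (w^`()).[a]) / w.[a].
  have := congr1 (fun q => (q^`()).[a]) Enw; rewrite /= !derivM !hornerE => E.
  by apply: (canRL (mulfK wa0)); rewrite -E; ring.
rewrite /quot_deriv E'a Ea; field.
by rewrite da0 wa0.
Qed.

Lemma coprimep_hornerN0 (n d m w : {poly F}) (a : F) :
  n * w = m * d -> coprimep n d -> w.[a] != 0 -> d.[a] != 0.
Proof.
move=> Enw cop wa0; apply/negP => /eqP da0.
suff /(coprimep_root cop) : root n a by rewrite da0 eqxx.
have := congr1 (horner^~ a) Enw; rewrite /= !hornerM da0 mulr0.
by move/eqP; rewrite mulf_eq0 (negbTE wa0) orbF.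
Qed.

Lemma multiplier_quot_deriv {h : F} {p M w : {poly F}} {a : F} :
  newton_num h p * w = M * newton_den p -> newton_den p != 0 -> w.[a] != 0 ->
  multiplier h p a = quot_deriv M w a.
Proof.
move=> Enw den0 wa0.
rewrite -[multiplier _ _ _]/(quot_deriv (newton_rnum h p) (newton_rden h p) a).
have g0 : gcdp (newton_num h p) (newton_den p) != 0.
  by rewrite gcdp_eq0 negb_and den0 orbT.
have Er : newton_rnum h p * w = M * newton_rden h p.
  apply: (mulIf g0); rewrite mulrAC divpK ?dvdp_gcdl // Enw.
  by rewrite -mulrA divpK ?dvdp_gcdr.
have cop : coprimep (newton_rnum h p) (newton_rden h p).
  by apply: coprimep_div_gcd; rewrite den0 orbT.
apply: quot_deriv_eq => //.
exact: coprimep_hornerN0 Er cop wa0.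
Qed.

End QuotientDerivative.

Section NewtonAtRoot.
Variables (F : fieldType) (h a : F) (u : {poly F}) (k : nat).

Let Xa := 'X - a%:P.
(* After cancelling (X - a)^k, the relaxed Newton map is M / w. *)
Let w := u *+ k.+1 + Xa * u^`().
Let M := 'X * w - h *: (Xa * u).

Lemma newton_den_factor : newton_den (u * Xa ^+ k.+1) = Xa ^+ k * w.
Proof.
rewrite /newton_den derivM deriv_exp derivXsubC mul1r /w /=.
by rewrite mulrnAr mulrDr exprS; ring.
Qed.

Lemma newton_num_factor : newton_num h (u * Xa ^+ k.+1) = Xa ^+ k * M.
Proof.
rewrite /newton_num (newton_den_factor : _^`() = _) /M.
by rewrite exprS -!mul_polyC; ring.
Qed.

Lemma multiplier_factor :
  u.[a] != 0 -> k.+1%:R != 0 :> F ->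
  multiplier h (u * Xa ^+ k.+1) a = 1 - h / k.+1%:R.
Proof.
move=> ua0 k0.
have wa : w.[a] = u.[a] *+ k.+1.
  by rewrite /w /Xa !hornerE subrr mul0r addr0 hornerMn.
have wa0 : w.[a] != 0 by rewrite wa -mulr_natr mulf_neq0.
have w0 : w != 0 by apply: contra_neq wa0 => ->; rewrite horner0.
have Enw : newton_num h (u * Xa ^+ k.+1) * w = M * newton_den (u * Xa ^+ k.+1).
  by rewrite newton_num_factor newton_den_factor; ring.
have den0 : newton_den (u * Xa ^+ k.+1) != 0.
  by rewrite newton_den_factor mulf_neq0 ?expf_neq0 ?polyXsubC_eq0.
rewrite (multiplier_quot_deriv _ Enw den0 wa0).
have Ma : M.[a] = a * w.[a].
  rewrite /M hornerD hornerN hornerZ !hornerM hornerX hornerXsubC subrr.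
  by rewrite mul0r mulr0 subr0.
have M'a : (M^`()).[a] = w.[a] + a * (w^`()).[a] - h * u.[a].
  rewrite /M /Xa derivB derivM derivX derivZ derivM derivXsubC.
  by rewrite !hornerE subrr; ring.
rewrite /quot_deriv Ma M'a wa -mulr_natr; field.
by rewrite addrC natr1 k0 ua0.
Qed.

End NewtonAtRoot.

Lemma multiplier_root (F : fieldType) (h : F) (p : {poly F}) (a : F) :
  has_pchar0 F -> p != 0 -> root p a ->
  multiplier h p a = 1 - h / (mup a p)%:R.
Proof.
move=> F0 p0 pa.
have [k [u ua0 Ep]] := multiplicity_XsubC p a; rewrite p0 /= in ua0.
have Emup : mup a p = k by rewrite Ep mupMr // mup_XsubCX eqxx.
case: k Ep Emup => [|k] Ep ->.
  by move: pa; rewrite Ep expr0 mulr1 (negbTE ua0).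
by rewrite Ep multiplier_factor // (pcharf0P _).1.
Qed.

Lemma superattracting_mup (F : fieldType) (h : F) (p : {poly F}) (a : F) :
  has_pchar0 F -> p != 0 -> root p a -> superattracting h p a ->
  h = (mup a p)%:R.
Proof.
move=> F0 p0 pa; rewrite /superattracting multiplier_root //.
by move/eqP; rewrite subr_eq0 eq_sym => /eqP/divr1_eq.
Qed.

Lemma tofrac_div_eq (R : idomainType) (x y x' y' : R) :
  x * y' = x' * y -> y != 0 -> y' != 0 -> x%:F / y%:F = x'%:F / y'%:F.
Proof.
move=> E y0 y'0; apply/eqP.
by rewrite eqr_div ?tofrac_eq0 // -!tofracM E.
Qed.

Lemma newton_frac_exp (F : fieldType) (q : {poly F}) (m : nat) :
  m%:R != 0 :> F -> newton_frac m%:R (q ^+ m) = newton_frac 1 q.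
Proof.
case: m => [|m] m0; first by rewrite eqxx in m0.
rewrite /newton_frac /= deriv_exp polyC_natr polyC1 mul1r /=; congr (_ - _).
have [->|q'0] := eqVneq q^`() 0.
  by rewrite !(mul0r, mul0rn, tofrac0, invr0, mulr0).
have [->|q0] := eqVneq q 0; first by rewrite expr0n mulr0 !tofrac0 !mul0r.
apply: tofrac_div_eq => //; first by rewrite exprS mulr_natl; ring.
by rewrite -mulr_natr !mulf_neq0 ?expf_neq0 // -polyC_natr polyC_eq0.
Qed.

Theorem mainTheorem7 (R : realType) (p : {poly R[i]}) (h : R[i]) :
  (exists a b : R[i], [/\ a != b, root p a & root p b]) ->
  h != 0 ->
  all_finite_fixed_superattracting h p ->
  (forall a b : R[i], root p a -> root p b -> mup a p = mup b p) /\
  (forall (m : nat) (q : {poly R[i]}),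
      (forall a : R[i], root p a -> mup a p = m) ->
      simple_roots q -> p = q ^+ m ->
      newton_frac h p = newton_frac 1 q).
Proof.
move=> [a0 [_ [_ pa0 _]]] _ sup.
have [-> | p0] := eqVneq p 0.
  split=> [a b _ _ | m q mup_m _]; first by rewrite !mup0.
  by rewrite -(mup_m a0 (root0 a0)) mup0 expr0 => /eqP; rewrite eq_sym oner_eq0.
have h_mup a : root p a -> h = (mup a p)%:R.
  by move=> pa; apply: superattracting_mup (pchar_num _) p0 pa (sup a pa).
split=> [a b pa pb | m q mup_m _ ->].
  by apply/eqP; rewrite -(eqr_nat R[i]) -(h_mup a pa) -(h_mup b pb).
rewrite (h_mup a0 pa0) mup_m // newton_frac_exp // pnatr_eq0 -lt0n.
by rewrite -(mup_m a0 pa0) -XsubC_dvd // dvdp_XsubCl.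
Qed.
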